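(* Let $a_{n,k}$ denote the number of matchings of size $n$ containing exactly $k$ occurrences of the endhered pattern $21$. For any integers $n>k\ge0$, $$a_{n,k}=\binom{n-1}{k}a_{n-k,0}.$$
   Context: A matching of size $n$ is a set of $n$ arcs $(a,b)$ with $1\le a<b\le 2n$ such that each point of $\{1,\dots,2n\}$ belongs to exactly one arc. An occurrence of the endhered pattern $21$ in a matching $\mu$ is a pair of arcs of $\mu$ of the form $(i+1,j+2),(i+2,j+1)$ (two nested arcs with consecutive starting points and consecutive ending points); the number of occurrences is the number of such pairs. *)

From mathcomp Require Import all_boot.
Set Implicit Arguments. Unset Strict Implicit. Unset Printing Implicit Defensive.

(* Points {1,...,2n} are represented 0-based by 'I_(n.*2): point p+1 <-> p. *)
Definition arc n := ('I_(n.*2) * 'I_(n.*2))%type.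

Definition is_matching n (M : {set arc n}) : bool :=
  [&& #|M| == n,
      [forall e in M, e.1 < e.2] &
      [forall x : 'I_(n.*2), #|[set e in M | (e.1 == x) || (e.2 == x)]| == 1]].

(* Occurrences of the endhered pattern 21: pairs of arcs (i+1,j+2),(i+2,j+1);
   each occurrence is determined by its outer arc (i+1,j+2). *)
Definition occ21 n (M : {set arc n}) : nat :=
  #|[set e in M | [exists f in M,
        (val f.1 == (val e.1).+1) && ((val f.2).+1 == val e.2)]]|.

Definition a_nk (n k : nat) : nat :=
  #|[set M : {set arc n} | is_matching M && (occ21 M == k)]|.

From mathcomp Require Import all_boot zify.
Set Implicit Arguments. Unset Strict Implicit. Unset Printing Implicit Defensive.

(* Double counting.  A matching of size n+1 with k+1 occurrences of 21, together
   with the outer arc (a,b) of one occurrence, corresponds bijectively to a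
   matching of size n with k occurrences together with one of its n arcs:
   delete the two points a and b, the inner arc (a+1,b-1) becoming (a,b-2); in
   the other direction replace an arc (a,b) by the nested pair (a,b+2),(a+1,b+1),
   which creates exactly one occurrence and preserves all others.  Hence
   (k+1) a_{n+1,k+1} = n a_{n,k}, and the formula follows by induction on k
   from k C(n-1,k) = (n-1) C(n-2,k-1). *)

Section Bump2.
Implicit Types i j a b m x y : nat.

Definition bump2 i j x := bump j (bump i x).
Definition unbump2 i j x := unbump i (unbump j x).

Ltac bump_lia := rewrite /bump2 /unbump2 /bump /unbump; lia.

Lemma bump2K i j : cancel (bump2 i j) (unbump2 i j).
Proof. by move=> x; rewrite /bump2 /unbump2 !bumpK. Qed.

Lemma bump2_inj i j : injective (bump2 i j).
Proof. exact: can_inj (bump2K i j). Qed.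

Lemma unbump2K i j x : i < j -> x != i -> x != j -> bump2 i j (unbump2 i j x) = x.
Proof. bump_lia. Qed.

Lemma bump2_le i j x : bump2 i j x <= x.+2.
Proof. bump_lia. Qed.

Lemma unbump2_le i j x : unbump2 i j x <= x.
Proof. bump_lia. Qed.

Lemma ltn_bump2 i j : {mono bump2 i j : x y / x < y}.
Proof. move=> x y; bump_lia. Qed.

Lemma bump2_neq i j x : i < j -> (bump2 i j x != i) && (bump2 i j x != j).
Proof. bump_lia. Qed.

Lemma unbump2_lt i j m x : i < j -> j < m.+2 -> x < m.+2 -> x != i -> x != j ->
  unbump2 i j x < m.
Proof. bump_lia. Qed.

Lemma bump2_small i j x : x < i -> i <= j -> bump2 i j x = x.
Proof. bump_lia. Qed.

Lemma bump2_mid i j x : i <= x -> x.+1 < j -> bump2 i j x = x.+1.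
Proof. bump_lia. Qed.

Lemma bump2_large i j x : i <= x -> j <= x.+1 -> bump2 i j x = x.+2.
Proof. bump_lia. Qed.

Lemma bump2SK i j : i < j -> cancel (bump2 i.+1 j) (unbump2 i j).
Proof. by move=> ltij x; bump_lia. Qed.

Lemma unbump2SK i j x : i.+1 < j -> x != i -> x != i.+1 -> x != j ->
  bump2 i.+1 j (unbump2 i j x) = x.
Proof. bump_lia. Qed.

Lemma unbump2_eq i j x : i.+1 < j -> x != i -> x != j -> unbump2 i j x = i -> x = i.+1.
Proof. bump_lia. Qed.

Lemma unbump2_mid i j x : i < x < j -> unbump2 i j x = x.-1.
Proof. bump_lia. Qed.

Lemma bump2_succ a b x y : a < b -> x != a -> x != b ->
  (bump2 a.+1 b.+2 y == (bump2 a.+1 b.+2 x).+1) = (y == x.+1).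
Proof. bump_lia. Qed.

End Bump2.

Section Matchings.
Variable B : nat.
Local Notation arcB := ('I_B * 'I_B)%type.
Implicit Types (M : {set arcB}) (e f g : arcB).

Definition touches (e : arcB) (x : nat) := (e.1 == x :> nat) || (e.2 == x :> nat).

(* Unlike [is_matching], matchings of every size live in the same type: the
   points of a matching of size n are the x : 'I_B with x < n.*2. *)
Definition matchingb n (M : {set arcB}) : bool :=
  [&& #|M| == n, [forall e in M, (e.1 < e.2) && (e.2 < n.*2)] &
      [forall x : 'I_B, (x < n.*2) ==>
         (#|[set e in M | (e.1 == x) || (e.2 == x)]| == 1)]].

Definition adj21 (e f : arcB) := (f.1 == e.1.+1 :> nat) && (f.2.+1 == e.2 :> nat).

Definition outer21 (M : {set arcB}) : {set arcB} :=
  [set e in M | [exists f in M, adj21 e f]].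

Definition matchings21 n k :=
  [set M : {set arcB} | matchingb n M && (#|outer21 M| == k)].

Lemma arc_inj (e f : arcB) : e.1 = f.1 :> nat -> e.2 = f.2 :> nat -> e = f.
Proof. by case: e f => [? ?] [? ?] /= /val_inj -> /val_inj ->. Qed.

Lemma touchesP (e : arcB) x : reflect (e.1 = x :> nat \/ e.2 = x :> nat) (touches e x).
Proof. by apply: (iffP orP) => -[] /eqP; auto. Qed.

Lemma matchingP n (M : {set arcB}) : reflect
  [/\ #|M| = n, (forall e : arcB, e \in M -> e.1 < e.2 < n.*2),
      (forall x : 'I_B, x < n.*2 -> exists2 e : arcB, e \in M & touches e x) &
      (forall (e f : arcB) x, e \in M -> f \in M -> touches e x -> touches f x -> e = f)]
  (matchingb n M).
Proof.
pose at_ (x : 'I_B) := [set e in M | (e.1 == x) || (e.2 == x)].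
have at_E x e : (e \in at_ x) = (e \in M) && touches e x by rewrite inE.
apply: (iffP and3P) => [[/eqP cardM /forall_inP arcsM /forallP coverM]|].
  split=> // [x ltx|e f x eM fM ex fx].
    have /cards1P[e atx] : #|at_ x| == 1 := implyP (coverM x) ltx.
    by have := set11 e; rewrite -atx at_E => /andP[]; exists e.
  have [y yx ey] : exists2 y : 'I_B, val y = x & touches e y.
    by case/touchesP: ex => <-; [exists e.1 | exists e.2]; rewrite // /touches eqxx ?orbT.
  subst x.
  have lty : y < n.*2.
    by have /andP[lt12 lt2] := arcsM e eM; case/touchesP: ey => <- //; apply: ltn_trans lt2.
  have /cards1P[z atz] : #|at_ y| == 1 := implyP (coverM y) lty.
  by move: (at_E y e) (at_E y f); rewrite atz !inE eM fM ey fx => /eqP-> /eqP->.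
move=> [cardM arcsM coverM uniqM]; split; first by rewrite cardM.
  by apply/forall_inP.
apply/forallP => x; apply/implyP => /coverM[e eM ex]; apply/cards1P; exists e.
apply/setP => f; rewrite -/(at_ x) at_E inE.
by apply/andP/eqP => [[fM fx]|->]; [apply: uniqM fM eM fx ex | ].
Qed.

Lemma arc_eqE (e f : arcB) : (e == f) = (e.1 == f.1 :> nat) && (e.2 == f.2 :> nat).
Proof. by case: e f => [? ?] [? ?]; rewrite xpair_eqE !val_eqE. Qed.

Lemma outer21_sub M : outer21 M \subset M.
Proof. by apply/subsetP => e; rewrite inE => /andP[]. Qed.

Lemma matching_arc n M (e : arcB) : matchingb n M -> e \in M -> e.1 < e.2 < n.*2.
Proof. by case/matchingP => _ arcsM _ _ /arcsM. Qed.

Lemma matching_apart n M (e g : arcB) : matchingb n M -> e \in M -> g \in M -> e != g ->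
  [/\ e.1 != g.1 :> nat, e.1 != g.2 :> nat, e.2 != g.1 :> nat & e.2 != g.2 :> nat].
Proof.
case/matchingP => _ _ _ uniqM eM gM /eqP neg.
have apart x : touches e x -> touches g x -> False.
  by move=> ex gx; apply: neg; apply: uniqM ex gx.
by split; apply/eqP => eg; [apply: (apart g.1) | apply: (apart g.2) | apply: (apart g.1)
  | apply: (apart g.2)]; rewrite /touches ?eg eqxx ?orbT.
Qed.

Lemma card_ord_lt m : m <= B -> #|[set x : 'I_B | x < m]| = m.
Proof.
move=> lemB; have widen_inj : injective (widen_ord lemB) by move=> x y [] /val_inj.
rewrite -[RHS]card_ord -(card_imset _ widen_inj).
apply: eq_card => x; rewrite inE; apply/idP/imsetP => [ltxm|[y _ ->]].
  by exists (Ordinal ltxm) => //; apply: val_inj.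
exact: (ltn_ord y).
Qed.

(* The 2n endpoints of n arcs cover the 2n points, so no point is covered twice. *)
Lemma matching_cover n M : n.*2 <= B -> #|M| = n ->
  (forall e : arcB, e \in M -> e.1 < e.2 < n.*2) ->
  (forall x : 'I_B, x < n.*2 -> exists2 e : arcB, e \in M & touches e x) ->
  matchingb n M.
Proof.
move=> le2nB cardM arcsM coverM.
pose endpt (eb : arcB * bool) := if eb.2 then eb.1.2 else eb.1.1.
have endpt_onto : endpt @: setX M [set: bool] = [set x : 'I_B | x < n.*2].
  apply/setP => x; rewrite inE; apply/imsetP/idP => [[[e b]] |].
    rewrite inE => /andP[/= /arcsM /andP[lt12 lt2] _] ->.
    by case: b => //; apply: ltn_trans lt2.
  case/coverM => e eM /touchesP ex.
  have [b xb] : exists b, x = endpt (e, b).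
    by case: ex => ex; [exists false | exists true]; apply: val_inj.
  by exists (e, b); rewrite ?inE ?eM.
have /imset_injP endpt_inj : #|endpt @: setX M [set: bool]| == #|setX M [set: bool]|.
  by rewrite endpt_onto card_ord_lt // cardsX cardM cardsT card_bool muln2.
apply/matchingP; split=> // e f x eM fM /touchesP ex /touchesP fx.
have side (d : arcB) : d.1 = x :> nat \/ d.2 = x :> nat ->
    exists b, endpt (d, b) = x :> nat by case=> dx; [exists false | exists true].
have [[b eb] [c fc]] := (side e ex, side f fx).
have : endpt (e, b) = endpt (f, c) by apply: val_inj; rewrite /= eb fc.
by move/endpt_inj; rewrite !inE eM fM => /(_ isT isT) [].
Qed.

(* Endpoints out of range fall back on those of [e0]; all uses below are in range. *)
Definition mkarc (e0 : arcB) (x y : nat) : arcB := (insubd e0.1 x, insubd e0.2 y).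

Lemma mkarc1 e0 x y : x < B -> (mkarc e0 x y).1 = x :> nat.
Proof. by move=> ltxB; rewrite /= val_insubd ltxB. Qed.

Lemma mkarc2 e0 x y : y < B -> (mkarc e0 x y).2 = y :> nat.
Proof. by move=> ltyB; rewrite /= val_insubd ltyB. Qed.

Definition relabel (f : nat -> nat) (e : arcB) := mkarc e (f e.1) (f e.2).

Definition outer_arc g := mkarc g g.1 g.2.+2.
Definition inner_arc g := mkarc g g.1.+1 g.2.+1.
(* The two new points a+1 and b+2 of [nest M (a,b)] are those skipped by [bump2 a.+1 b.+2]. *)
Definition nest_arc g e := if e == g then inner_arc g else relabel (bump2 g.1.+1 g.2.+2) e.
Definition nest M g := outer_arc g |: nest_arc g @: M.

Definition unnest_arc e := mkarc e e.1 (e.2 - 2).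
Definition unnest M e := relabel (unbump2 e.1 e.2) @: (M :\ e).

Lemma outer_arc1 g : (outer_arc g).1 = g.1 :> nat.
Proof. exact: mkarc1. Qed.

Lemma unnest_arc1 e : (unnest_arc e).1 = e.1 :> nat.
Proof. exact: mkarc1. Qed.

Lemma unnest_arc2 e : (unnest_arc e).2 = e.2 - 2 :> nat.
Proof. by rewrite mkarc2 // (leq_ltn_trans (leq_subr _ _)). Qed.

Lemma relabel_unbump2_1 i j e : (relabel (unbump2 i j) e).1 = unbump2 i j e.1 :> nat.
Proof. by rewrite mkarc1 // (leq_ltn_trans (unbump2_le _ _ _)). Qed.

Lemma relabel_unbump2_2 i j e : (relabel (unbump2 i j) e).2 = unbump2 i j e.2 :> nat.
Proof. by rewrite mkarc2 // (leq_ltn_trans (unbump2_le _ _ _)). Qed.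

End Matchings.

Lemma a_nk_matchings21 n k : a_nk n k = #|matchings21 n.*2 n k|.
Proof.
apply: eq_card => M; rewrite !inE /is_matching /matchingb /occ21 /outer21.
congr ([&& _, _ & _] && _).
  by apply: eq_forallb => e; rewrite ltn_ord andbT.
by apply: eq_forallb => x; rewrite ltn_ord.
Qed.

Section Widen.
Variables (B B' : nat) (leBB' : B <= B').
Local Notation arcB := ('I_B * 'I_B)%type.

Definition widen_arc (e : arcB) : 'I_B' * 'I_B' :=
  (widen_ord leBB' e.1, widen_ord leBB' e.2).

Lemma widen_arc_inj : injective widen_arc.
Proof. by move=> e f [e1 e2]; apply: arc_inj. Qed.

Lemma matchingb_widen n (M : {set arcB}) :
  n.*2 <= B -> matchingb n (widen_arc @: M) = matchingb n M.
Proof.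
move=> le2nB; have cardW := card_imset _ widen_arc_inj.
apply/matchingP/matchingP => -[cardM arcsM coverM uniqM]; split.
- by rewrite -cardM cardW.
- by move=> e eM; exact: (arcsM (widen_arc e) (imset_f _ eM)).
- move=> x ltx; have [_ /imsetP[e eM ->]] := coverM (widen_ord leBB' x) ltx.
  by exists e.
- by move=> e f x eM fM ex fx; apply: widen_arc_inj; apply: (uniqM _ _ x); rewrite ?imset_f.
- by rewrite cardW.
- by move=> _ /imsetP[e eM ->]; apply: arcsM.
- move=> x ltx; have [e eM ex] := coverM (Ordinal (leq_trans ltx le2nB)) ltx.
  by exists (widen_arc e); rewrite ?imset_f.
- move=> _ _ x /imsetP[e eM ->] /imsetP[f fM ->] ex fx.
  by rewrite (uniqM e f x).
Qed.

Lemma outer21_widen (M : {set arcB}) : outer21 (widen_arc @: M) = widen_arc @: outer21 M.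
Proof.
apply/setP => e; apply/idP/idP.
  rewrite inE => /andP[/imsetP[e0 e0M ->] /exists_inP[_ /imsetP[f fM ->] ef]].
  by rewrite imset_f // inE e0M; apply/exists_inP; exists f.
case/imsetP => e0; rewrite inE => /andP[e0M /exists_inP[f fM ef]] ->.
by rewrite inE imset_f //; apply/exists_inP; exists (widen_arc f); rewrite ?imset_f.
Qed.

Lemma matchingb_widenP n (M : {set 'I_B' * 'I_B'}) :
  n.*2 <= B -> matchingb n M -> M = widen_arc @: (widen_arc @^-1: M).
Proof.
move=> le2nB /matchingP[_ arcsM _ _]; apply/setP => e.
apply/idP/imsetP => [eM|[e0 + ->]]; last by rewrite inE.
have /andP[lt12 lt2] := arcsM e eM.
have lt2B := leq_trans lt2 le2nB; have lt1B := ltn_trans lt12 lt2B.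
pose e0 : arcB := (Ordinal lt1B, Ordinal lt2B).
have e_def : e = widen_arc e0 by apply: arc_inj.
by exists e0; rewrite // inE -e_def.
Qed.

Lemma card_matchings21_widen n k :
  n.*2 <= B -> #|matchings21 B' n k| = #|matchings21 B n k|.
Proof.
move=> le2nB; have widenM_inj := imset_inj widen_arc_inj.
rewrite -(card_imset _ widenM_inj); apply: eq_card => M.
apply/idP/imsetP => [|[M0 + ->]]; rewrite !inE; last first.
  by rewrite matchingb_widen // outer21_widen card_imset //; apply: widen_arc_inj.
move=> /andP[Mm Mk]; have M_def := matchingb_widenP le2nB Mm.
exists (widen_arc @^-1: M) => //.
by rewrite inE -matchingb_widen // -(card_imset _ widen_arc_inj) -outer21_widen -M_def Mm.
Qed.

End Widen.

Section Nest.
Variable B : nat.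
Local Notation arcB := ('I_B * 'I_B)%type.
Implicit Types (e f : arcB).

Variables (n : nat) (M : {set arcB}) (g : arcB).
Hypotheses (Mm : matchingb n M) (gM : g \in M) (le2nB : n.+1.*2 <= B).
Local Notation shift := (bump2 g.1.+1 g.2.+2).

Let g_lt : g.1 < g.2 < n.*2. Proof. exact: matching_arc Mm gM. Qed.
Let lt_g12 : g.1 < g.2. Proof. by case/andP: g_lt. Qed.

Lemma outer_arc2 : (outer_arc g).2 = g.2.+2 :> nat.
Proof. by rewrite mkarc2 //; lia. Qed.
Lemma nest_arc_self1 : (nest_arc g g).1 = g.1.+1 :> nat.
Proof. by rewrite /nest_arc eqxx mkarc1 //; lia. Qed.
Lemma nest_arc_self2 : (nest_arc g g).2 = g.2.+1 :> nat.
Proof. by rewrite /nest_arc eqxx mkarc2 //; lia. Qed.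

Section NestArc.
Variables (e : arcB) (eM : e \in M) (neg : e != g).

Lemma nest_arc1 : (nest_arc g e).1 = shift e.1 :> nat.
Proof.
rewrite /nest_arc (negPf neg) mkarc1 //; have := bump2_le g.1.+1 g.2.+2 e.1.
by have := matching_arc Mm eM; lia.
Qed.
Lemma nest_arc2 : (nest_arc g e).2 = shift e.2 :> nat.
Proof.
rewrite /nest_arc (negPf neg) mkarc2 //; have := bump2_le g.1.+1 g.2.+2 e.2.
by have := matching_arc Mm eM; lia.
Qed.
End NestArc.

Let shift_g1 : shift g.1 = g.1.
Proof. by apply: bump2_small => //; lia. Qed.
Let shift_g2 : shift g.2 = g.2.+1.
Proof. by apply: bump2_mid; lia. Qed.

Lemma nest_arc_inj : {in M &, injective (nest_arc g)}.
Proof.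
move=> e f eM fM /eqP; rewrite arc_eqE => /andP[/eqP ef1 /eqP ef2].
have shift_neq x : shift x != g.1.+1.
  by have /andP[] : (shift x != g.1.+1) && (shift x != g.2.+2) by apply: bump2_neq; lia.
case: (eqVneq e g) ef1 ef2 => [->|neg]; case: (eqVneq f g) => [->|nfg] //.
- by rewrite nest_arc_self1 nest_arc1 // => /eqP; rewrite eq_sym (negPf (shift_neq _)).
- by rewrite nest_arc_self1 nest_arc1 // => /eqP; rewrite (negPf (shift_neq _)).
- rewrite !nest_arc1 ?nest_arc2 // => /bump2_inj ef1 /bump2_inj ef2.
  exact: arc_inj.
Qed.

Lemma outer_arc_notin : outer_arc g \notin nest_arc g @: M.
Proof.
apply/imsetP => -[e eM /eqP]; rewrite arc_eqE outer_arc1 => /andP[/eqP + _].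
case: (eqVneq e g) => [->|neg]; first by rewrite nest_arc_self1; lia.
have [/negP ne1 _ _ _] := matching_apart Mm eM gM neg.
by rewrite nest_arc1 // -{1}shift_g1 => /bump2_inj/esym/eqP.
Qed.

Lemma nest_memP q : reflect (q = outer_arc g \/ exists2 e : arcB, e \in M & q = nest_arc g e)
  (q \in nest M g).
Proof. by apply: (iffP setU1P) => -[-> | /imsetP]; auto. Qed.

Lemma outer_arc_mem : outer_arc g \in nest M g.
Proof. exact: setU11. Qed.

Lemma nest_arc_mem e : e \in M -> nest_arc g e \in nest M g.
Proof. by move=> eM; rewrite setU1r ?imset_f. Qed.

Lemma matchingb_nest : matchingb n.+1 (nest M g).
Proof.
have [cardM _ coverM _] := matchingP _ _ Mm.
apply: matching_cover => //.
- by rewrite cardsU1 outer_arc_notin card_in_imset ?cardM //; apply: nest_arc_inj.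
- move=> q /nest_memP[-> | [e eM ->]].
    by rewrite outer_arc1 outer_arc2; lia.
  case: (eqVneq e g) => [->|neg]; first by rewrite nest_arc_self1 nest_arc_self2; lia.
  have /andP[lt12 lt2] := matching_arc Mm eM.
  rewrite nest_arc1 ?nest_arc2 // ltn_bump2 lt12 /=.
  by have := bump2_le g.1.+1 g.2.+2 e.2; lia.
- move=> x ltx.
  case: (boolP ((g.1 == x :> nat) || (g.2.+2 == x :> nat))) => [xo|nxo].
    by exists (outer_arc g); rewrite ?outer_arc_mem // /touches outer_arc1 outer_arc2.
  case: (boolP ((g.1.+1 == x :> nat) || (g.2.+1 == x :> nat))) => [xi|nxi].
    by exists (nest_arc g g); rewrite ?nest_arc_mem // /touches nest_arc_self1 nest_arc_self2.
  have [xi xj] : x != g.1.+1 :> nat /\ x != g.2.+2 :> nat by split; lia.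
  pose y := unbump2 g.1.+1 g.2.+2 x.
  have lty : y < n.*2 by apply: unbump2_lt => //; lia.
  have ltyB : y < B by lia.
  have xE : shift y = x by apply: unbump2K; lia.
  have [e eM /touchesP /= ey] := coverM (Ordinal ltyB) lty.
  have neg : e != g.
    apply/eqP => egE; move: ey nxo nxi; rewrite egE -xE => -[] <-.
      by rewrite shift_g1 eqxx.
    by rewrite shift_g2 eqxx orbT.
  exists (nest_arc g e); first exact: nest_arc_mem.
  by rewrite /touches nest_arc1 ?nest_arc2 // -xE; case: ey => ->; rewrite eqxx ?orbT.
Qed.

Lemma adj21_outer_inner : adj21 (outer_arc g) (nest_arc g g).
Proof. by rewrite /adj21 outer_arc1 outer_arc2 nest_arc_self1 nest_arc_self2 !eqxx. Qed.

Lemma adj21_nest_inner e : e \in M -> adj21 (nest_arc g e) (nest_arc g g) = false.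
Proof.
move=> eM; rewrite /adj21 nest_arc_self1.
case: (eqVneq e g) => [->|neg]; first by rewrite nest_arc_self1; lia.
have [ne1 _ _ _] := matching_apart Mm eM gM neg.
by rewrite nest_arc1 // eqSS -{1}shift_g1 (inj_eq (@bump2_inj _ _)) eq_sym (negPf ne1).
Qed.

Lemma adj21_nest_outer e : e \in M -> adj21 (nest_arc g e) (outer_arc g) = adj21 e g.
Proof.
move=> eM; rewrite /adj21 outer_arc1 outer_arc2.
case: (eqVneq e g) => [->|neg]; first by rewrite nest_arc_self1; lia.
have [ne1 ne2 _ _] := matching_apart Mm eM gM neg.
have shift_g2S : shift g.2.+1 = g.2.+3 by apply: bump2_large; lia.
rewrite nest_arc1 ?nest_arc2 // -{1}shift_g1 bump2_succ //.
by rewrite -shift_g2S (inj_eq (@bump2_inj _ _)).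
Qed.

Lemma adj21_nest e f : e \in M -> f \in M -> f != g ->
  adj21 (nest_arc g e) (nest_arc g f) = adj21 e f.
Proof.
move=> eM fM nfg; have [nf1 nf2 nf3 nf4] := matching_apart Mm fM gM nfg.
rewrite /adj21 (nest_arc1 fM nfg) (nest_arc2 fM nfg).
case: (eqVneq e g) => [->|neg].
  have shift_g1S : shift g.1.+1 = g.1.+2 by apply: bump2_mid; lia.
  rewrite nest_arc_self1 nest_arc_self2 -shift_g1S (inj_eq (@bump2_inj _ _)).
  have -> : ((shift f.2).+1 == g.2.+1) = (shift g.2 == (shift f.2).+1).
    by rewrite shift_g2 eq_sym.
  by rewrite bump2_succ // [_ == f.2.+1]eq_sym.
have [ne1 ne2 _ _] := matching_apart Mm eM gM neg.
rewrite nest_arc1 ?nest_arc2 // bump2_succ //.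
by rewrite [_.+1 == _]eq_sym bump2_succ // [_ == f.2.+1]eq_sym.
Qed.

(* An occurrence with inner arc g is carried to one with inner arc [outer_arc g]. *)
Lemma nest_arc_outer21 e : e \in M ->
  (nest_arc g e \in outer21 (nest M g)) = (e \in outer21 M).
Proof.
move=> eM; rewrite [in LHS]inE [in RHS]inE nest_arc_mem // eM /=.
apply/exists_inP/exists_inP => [[r /nest_memP[-> | [f fM ->]]] | [f fM ef]].
- by rewrite adj21_nest_outer //; exists g.
- case: (eqVneq f g) => [->|nfg]; first by rewrite adj21_nest_inner.
  by rewrite adj21_nest //; exists f.
- case: (eqVneq f g) ef => [->|nfg] ef.
    by exists (outer_arc g); rewrite ?outer_arc_mem ?adj21_nest_outer.
  by exists (nest_arc g f); rewrite ?nest_arc_mem ?adj21_nest.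
Qed.

Lemma outer21_nest : outer21 (nest M g) = outer_arc g |: nest_arc g @: outer21 M.
Proof.
apply/setP => q; apply/idP/setU1P => [qO | [-> | /imsetP[e eO ->]]].
- have /nest_memP[-> | [e eM qE]] := subsetP (outer21_sub _) q qO; first by left.
  by right; rewrite qE imset_f // -nest_arc_outer21 // -qE.
- rewrite inE outer_arc_mem; apply/exists_inP.
  by exists (nest_arc g g); rewrite ?nest_arc_mem ?adj21_outer_inner.
- by rewrite nest_arc_outer21 // (subsetP (outer21_sub _)).
Qed.

Lemma card_outer21_nest : #|outer21 (nest M g)| = #|outer21 M|.+1.
Proof.
have subM := subsetP (outer21_sub M).
rewrite outer21_nest cardsU1 card_in_imset; last first.
  by move=> e f /subM eM /subM fM; apply: nest_arc_inj.
by rewrite (contra (subsetP (imsetS _ (outer21_sub M)) _) outer_arc_notin).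
Qed.

Lemma unnest_nest : unnest (nest M g) (outer_arc g) = M.
Proof.
rewrite /unnest /nest setU1K ?outer_arc_notin // -imset_comp -[RHS]imset_id.
rewrite outer_arc1 outer_arc2; apply: eq_in_imset => e eM /=.
have lt_g2 : g.1 < g.2.+2 by lia.
case: (eqVneq e g) => [->|neg]; apply: arc_inj;
  rewrite ?relabel_unbump2_1 ?relabel_unbump2_2.
- by rewrite nest_arc_self1 unbump2_mid //; lia.
- by rewrite nest_arc_self2 unbump2_mid //; lia.
- by rewrite nest_arc1 // bump2SK.
- by rewrite nest_arc2 // bump2SK.
Qed.

Lemma unnest_arc_outer : unnest_arc (outer_arc g) = g.
Proof.
apply: arc_inj; first by rewrite unnest_arc1 outer_arc1.
by rewrite unnest_arc2 outer_arc2; lia.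
Qed.

End Nest.

Section Unnest.
Variable B : nat.
Local Notation arcB := ('I_B * 'I_B)%type.
Implicit Types (f p : arcB).

Variables (n : nat) (M : {set arcB}) (e : arcB).
Hypotheses (Mm : matchingb n.+1 M) (eO : e \in outer21 M) (le2nB : n.+1.*2 <= B).
Local Notation unshift := (unbump2 e.1 e.2).

Let eM : e \in M. Proof. by move: eO; rewrite inE => /andP[]. Qed.

Lemma outer21_inner : exists2 f, f \in M & adj21 e f.
Proof. by move: eO; rewrite inE => /andP[_ /exists_inP]. Qed.

Let e_lt : e.1.+2 < e.2 < n.+1.*2.
Proof.
have [f fM /andP[/eqP f1 /eqP f2]] := outer21_inner.
by have := matching_arc Mm fM; have := matching_arc Mm eM; lia.
Qed.


Lemma unshift_inj : {in M :\ e &, injective (relabel unshift)}.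
Proof.
move=> p q /setD1P[npe pM] /setD1P[nqe qM] /eqP.
have [ne1 ne2 ne3 ne4] := matching_apart Mm pM eM npe.
have [nf1 nf2 nf3 nf4] := matching_apart Mm qM eM nqe.
have e12 : e.1 < e.2 by lia.
rewrite arc_eqE !relabel_unbump2_1 !relabel_unbump2_2 => /andP[/eqP pq1 /eqP pq2].
apply: arc_inj.
  by rewrite -(unbump2K e12 ne1 ne2) pq1 unbump2K.
by rewrite -(unbump2K e12 ne3 ne4) pq2 unbump2K.
Qed.

Lemma matchingb_unnest : matchingb n (unnest M e).
Proof.
have [cardM _ coverM _] := matchingP _ _ Mm.
have e12 : e.1 < e.2 by lia.
apply: matching_cover => //.
- by lia.
- rewrite card_in_imset; last exact: unshift_inj.
  by move: cardM; rewrite (cardsD1 e) eM => -[].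
- move=> _ /imsetP[p /setD1P[npe pM] ->].
  have [ne1 ne2 ne3 ne4] := matching_apart Mm pM eM npe.
  have /andP[lt12 lt2] := matching_arc Mm pM.
  rewrite relabel_unbump2_1 relabel_unbump2_2.
  rewrite -(ltn_bump2 e.1 e.2) !unbump2K // lt12 /=.
  by apply: unbump2_lt => //; lia.
- move=> x ltx.
  pose y := bump2 e.1 e.2 x.
  have [ny1 ny2] : y != e.1 /\ y != e.2 by apply/andP; apply: bump2_neq.
  have lty : y < n.+1.*2 by have := bump2_le e.1 e.2 x; lia.
  have ltyB : y < B by lia.
  have [p pM /touchesP /= py] := coverM (Ordinal ltyB) lty.
  have npe : p != e.
    by apply/eqP => pe; move: py ny1 ny2; rewrite pe => -[] <-; rewrite eqxx.
  exists (relabel unshift p); first by rewrite imset_f // !inE npe.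
  by rewrite /touches relabel_unbump2_1 relabel_unbump2_2; case: py => ->;
    rewrite bump2K eqxx ?orbT.
Qed.

Lemma unshift_inner f : f \in M -> adj21 e f -> relabel unshift f = unnest_arc e.
Proof.
move=> fM /andP[/eqP f1 /eqP f2]; have e12 : e.1 < e.2 by lia.
apply: arc_inj; rewrite ?relabel_unbump2_1 ?relabel_unbump2_2 ?unnest_arc1 ?unnest_arc2.
  by rewrite f1 unbump2_mid //; lia.
by rewrite -f2 unbump2_mid //; lia.
Qed.

Lemma unnest_arc_mem : unnest_arc e \in unnest M e.
Proof.
have [f fM ef] := outer21_inner.
have nfe : f != e by apply: contraTneq ef => ->; rewrite /adj21; lia.
by rewrite -(unshift_inner fM ef) imset_f // !inE nfe.
Qed.

Lemma outer_unnest_arc : outer_arc (unnest_arc e) = e.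
Proof.
have [Nm gN] := (matchingb_unnest, unnest_arc_mem).
apply: arc_inj; first by rewrite outer_arc1 unnest_arc1.
by rewrite (outer_arc2 Nm gN le2nB) unnest_arc2; lia.
Qed.

Lemma nest_arc_unshift p : p \in M :\ e -> nest_arc (unnest_arc e) (relabel unshift p) = p.
Proof.
move=> /setD1P[npe pM]; have [Nm gN] := (matchingb_unnest, unnest_arc_mem).
have [f fM ef] := outer21_inner; have /andP[/eqP f1 /eqP f2] := ef.
have e12 : e.1.+1 < e.2 by lia.
case: (eqVneq p f) => [->|npf].
  rewrite (unshift_inner fM ef); apply: arc_inj.
    by rewrite (nest_arc_self1 Nm gN le2nB) unnest_arc1.
  by rewrite (nest_arc_self2 Nm gN le2nB) unnest_arc2; lia.
have [ne1 ne2 ne3 ne4] := matching_apart Mm pM eM npe.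
have [nf1 _ nf3 _] := matching_apart Mm pM fM npf.
have qN : relabel unshift p \in unnest M e by rewrite imset_f // !inE npe.
have nqg : relabel unshift p != unnest_arc e.
  apply: contra nf1; rewrite arc_eqE relabel_unbump2_1 unnest_arc1 => /andP[/eqP p1 _].
  by rewrite f1 (unbump2_eq e12 ne1 ne2 p1).
have e2E : (unnest_arc e).2.+2 = e.2 by rewrite unnest_arc2; lia.
apply: arc_inj.
  rewrite (nest_arc1 Nm gN le2nB qN nqg) relabel_unbump2_1 unnest_arc1 e2E.
  by rewrite unbump2SK // -f1.
rewrite (nest_arc2 Nm gN le2nB qN nqg) relabel_unbump2_2 unnest_arc1 e2E.
by rewrite unbump2SK // -f1.
Qed.

Lemma nest_unnest : nest (unnest M e) (unnest_arc e) = M.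
Proof.
rewrite /nest outer_unnest_arc /unnest -imset_comp.
have -> : [set (nest_arc (unnest_arc e) \o relabel unshift) p | p in M :\ e] = M :\ e.
  by rewrite -[RHS]imset_id; apply: eq_in_imset; exact: nest_arc_unshift.
exact: setD1K.
Qed.

End Unnest.

Lemma card_dep_pairs (X Y : finType) (A : {set X}) (F : X -> {set Y}) :
  #|[set p : X * Y | (p.1 \in A) && (p.2 \in F p.1)]| = \sum_(a in A) #|F a|.
Proof.
rewrite -sum1_card (eq_bigl (fun p : X * Y => (p.1 \in A) && (p.2 \in F p.1))) => [|p].
  rewrite -(pair_big_dep (mem A) (fun a => mem (F a)) (fun _ _ => 1)).
  by apply: eq_bigr => a _; rewrite sum1_card.
by rewrite inE.
Qed.

Section Count.
Variable B : nat.
Local Notation arcB := ('I_B * 'I_B)%type.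

Definition marked_outer n k :=
  [set p : {set arcB} * arcB | (p.1 \in matchings21 B n k) && (p.2 \in outer21 p.1)].
Definition marked_arc n k :=
  [set p : {set arcB} * arcB | (p.1 \in matchings21 B n k) && (p.2 \in p.1)].

Lemma card_marked_outer n k : #|marked_outer n k| = k * #|matchings21 B n k|.
Proof.
rewrite card_dep_pairs (eq_bigr (fun _ => k)) => [|M]; first by rewrite sum_nat_const mulnC.
by rewrite inE => /andP[_ /eqP].
Qed.

Lemma card_marked_arc n k : #|marked_arc n k| = n * #|matchings21 B n k|.
Proof.
rewrite (card_dep_pairs _ id) (eq_bigr (fun _ => n)) => [|M].
  by rewrite sum_nat_const mulnC.
by rewrite inE => /andP[/matchingP[]].
Qed.

Definition nest_pair (p : {set arcB} * arcB) := (nest p.1 p.2, outer_arc p.2).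
Definition unnest_pair (p : {set arcB} * arcB) := (unnest p.1 p.2, unnest_arc p.2).

Lemma marked_outer_nest n k : n.+1.*2 <= B ->
  marked_outer n.+1 k.+1 = nest_pair @: marked_arc n k.
Proof.
move=> le2nB; apply/setP => -[M e]; apply/idP/imsetP => [|[[N g]]].
  rewrite inE /= => /andP[]; rewrite inE => /andP[Mm /eqP Mk] eO.
  have [Nm gN] := (matchingb_unnest Mm eO le2nB, unnest_arc_mem Mm eO le2nB).
  have NgE := nest_unnest Mm eO le2nB.
  exists (unnest_pair (M, e)); last first.
    by rewrite /nest_pair /= NgE (outer_unnest_arc Mm eO le2nB).
  rewrite !inE /= Nm gN andbT /=.
  by have := card_outer21_nest Nm gN le2nB; rewrite NgE Mk => -[->].
rewrite inE /= => /andP[]; rewrite inE => /andP[Nm /eqP Nk] gN [-> ->].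
rewrite inE /= inE (matchingb_nest Nm gN le2nB) (card_outer21_nest Nm gN le2nB) Nk eqxx.
by rewrite (outer21_nest Nm gN le2nB) setU11.
Qed.

Lemma card_matchings21S n k : n.+1.*2 <= B ->
  k.+1 * #|matchings21 B n.+1 k.+1| = n * #|matchings21 B n k|.
Proof.
move=> le2nB; rewrite -card_marked_outer -card_marked_arc marked_outer_nest //.
apply: card_in_imset; apply: (can_in_inj (g := unnest_pair)) => -[M g].
rewrite inE /= => /andP[]; rewrite inE => /andP[Mm _] gM.
by rewrite /unnest_pair /= (unnest_nest Mm gM le2nB) (unnest_arc_outer Mm gM le2nB).
Qed.

Lemma card_matchings21 n k : n.*2 <= B -> k < n ->
  #|matchings21 B n k| = 'C(n.-1, k) * #|matchings21 B (n - k) 0|.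
Proof.
elim: k n => [|k IHk] [|n] //= le2nB ltkn; first by rewrite bin0 mul1n subn0.
apply/eqP; rewrite -(eqn_pmul2l (ltn0Sn k)) card_matchings21S //.
rewrite IHk ?(leq_trans _ le2nB) ?leq_double // subSS mulnA mul_bin_diag.
by rewrite -mulnA.
Qed.

End Count.

Theorem lemma2 (n k : nat) : k < n -> a_nk n k = 'C(n.-1, k) * a_nk (n - k) 0.
Proof.
move=> ltkn; rewrite !a_nk_matchings21 card_matchings21 //.
have le_2nk_2n : (n - k).*2 <= n.*2 by rewrite leq_double leq_subr.
by rewrite (card_matchings21_widen le_2nk_2n).
Qed.
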